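(* Let $P$, $T_\Sigma$, the lattice points $b_1,\dots,b_{p+3}$ and the coefficients $a_i(q)$ be as in the context. Let $b_{i_1},b_{i_2},b_{i_3}$ be the vertices of a triangle $\sigma$ of $T_\Sigma$, listed in counterclockwise order, and let $b_{i_4}$ be a lattice point of $P$ which is not a vertex of $\sigma$. Write $b_{i_4}=b_{i_3}+m'(b_{i_1}-b_{i_3})+n'(b_{i_2}-b_{i_3})$ with $m',n'\in\mathbb{Z}$. Then $$\frac{a_{i_4}(q)\,a_{i_3}(q)^{m'+n'-1}}{a_{i_1}(q)^{m'}\,a_{i_2}(q)^{n'}}$$ is a non-constant monomial of $q$.
   Context: Let $P\subset\mathbb{R}^2$ be a convex lattice polygon with a unimodular triangulation $T_\Sigma$ (every triangle of $T_\Sigma$ has lattice vertices and area $1/2$, and the vertex set of $T_\Sigma$ is $P\cap\mathbb{Z}^2$); this encodes a smooth toric Calabi–Yau 3-fold whose fan has rays generated by $(m,n,1)$, $(m,n)\in P\cap\mathbb{Z}^2$, and 3-cones over the triangles of $T_\Sigma$. Write $P\cap\mathbb{Z}^2=\{b_1,\dots,b_{p+3}\}$, $b_i=(m_i,n_i)$, with $b_1=(1,0)$, $b_2=(0,1)$, $b_3=(0,0)$, where $\sigma_1=\{b_1,b_2,b_3\}$ is a triangle of $T_\Sigma$. Let $L=\ker(\mathbb{Z}^{p+3}\to\mathbb{Z}^3,\ e_i\mapsto(m_i,n_i,1))$ and let $D_i\in L^\vee$ be the restriction of the $i$-th coordinate functional. For a triangle $\sigma$ of $T_\Sigma$ let $I'_\sigma$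 be the set of indices of its vertices; then $\{D_j:j\notin I'_\sigma\}$ is a basis of $L^\vee\otimes\mathbb{Q}$. Fix $H_1,\dots,H_p\in L^\vee\otimes\mathbb{Q}$ (nef classes) such that for every triangle $\sigma$, $H_k=\sum_{j\notin I'_\sigma}s^\sigma_{k,j}D_j$ with all $s^\sigma_{k,j}\in\mathbb{Z}_{\ge0}$ and the matrix $(s^\sigma_{k,j})$ nondegenerate. For $q\in(\mathbb{C}^* )^p$ put $a_i(q)=1$ for $i=1,2,3$ and $a_i(q)=\prod_{k=1}^p q_k^{s^{\sigma_1}_{k,i}}$ for $i\ge4$; the mirror curve is $\{H=0\}\subset(\mathbb{C}^* )^2$ with $H(X,Y,q)=\sum_{i=1}^{p+3}a_i(q)X^{m_i}Y^{n_i}$. A non-constant monomial of $q$ means $\prod_k q_k^{e_k}$ with $e_k\in\mathbb{Z}_{\ge0}$ not all zero. *)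

From HB Require Import structures.
From mathcomp Require Import all_boot all_order all_algebra.
Set Implicit Arguments. Unset Strict Implicit. Unset Printing Implicit Defensive.
Import Order.TTheory GRing.Theory Num.Theory.
Local Open Scope ring_scope.

(* Lattice points are indexed by 'I_p.+3 (= {b_1,...,b_{p+3}}); index 0,1,2
   correspond to b_1, b_2, b_3 of the paper. *)
Definition o0 {p : nat} : 'I_p.+3 := @Ordinal p.+3 0 isT.
Definition o1 {p : nat} : 'I_p.+3 := @Ordinal p.+3 1 isT.
Definition o2 {p : nat} : 'I_p.+3 := @Ordinal p.+3 2 isT.

Definition vsub (u v : int * int) : int * int := (u.1 - v.1, u.2 - v.2).
Definition det2 (u v : int * int) : int := u.1 * v.2 - u.2 * v.1.

Definition in_hull (N : nat) (b : 'I_N -> int * int) (S : {set 'I_N})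
    (x : rat * rat) : Prop :=
  exists lam : 'I_N -> rat,
    [/\ (forall j, 0 <= lam j), (forall j, j \notin S -> lam j = 0),
        \sum_j lam j = 1,
        x.1 = \sum_j lam j * ((b j).1)%:~R
      & x.2 = \sum_j lam j * ((b j).2)%:~R].

Definition lattice_points_of_polygon (N : nat) (b : 'I_N -> int * int) : Prop :=
  injective b /\
  forall z : int * int, in_hull b setT ((z.1)%:~R, (z.2)%:~R) ->
    exists j, b j = z.

Definition unimodular_triangulation (N : nat) (b : 'I_N -> int * int)
    (T : seq {set 'I_N}) : Prop :=
  [/\ uniq T,
      (forall sg, sg \in T -> #|sg| = 3%N /\
         exists i j k, sg = [set i; j; k] /\
           `|det2 (vsub (b i) (b k)) (vsub (b j) (b k))| = 1),
      (forall x, in_hull b setT x <-> exists2 sg, sg \in T & in_hull b sg x),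
      (forall sg tau x, sg \in T -> tau \in T ->
         in_hull b sg x -> in_hull b tau x -> in_hull b (sg :&: tau) x)
    & (forall j, exists2 sg, sg \in T & j \in sg)].

Definition in_L (N : nat) (b : 'I_N -> int * int) (l : 'I_N -> int) : Prop :=
  [/\ \sum_j l j * (b j).1 = 0, \sum_j l j * (b j).2 = 0 & \sum_j l j = 0].

Definition nondegenerate_coeffs (p : nat) (s : 'I_p -> 'I_p.+3 -> nat)
    (sg : {set 'I_p.+3}) : Prop :=
  #|~: sg| = p /\
  \rank (\matrix_(k < p, t < #|~: sg|) ((s k (enum_val t))%:R : rat)) = p.

Definition a_coef (F : fieldType) (p : nat) (s1 : 'I_p -> 'I_p.+3 -> nat)
    (i : 'I_p.+3) (q : 'I_p -> F) : F :=
  if (i < 3)%N then 1 else \prod_(k < p) q k ^+ s1 k i.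

Definition nonconstant_monomial (F : fieldType) (p : nat)
    (f : ('I_p -> F) -> F) : Prop :=
  exists e : 'I_p -> nat, (exists k, e k != 0%N) /\
    forall q : 'I_p -> F, (forall k, q k != 0) -> f q = \prod_(k < p) q k ^+ e k.

(** The integer vector [l = e_{i4} + (m'+n'-1) e_{i3} - m' e_{i1} - n' e_{i2}]
    encodes the affine relation between [b_{i4}] and the vertices of the
    triangle, so it lies in [L].  The exponent of [q_k] in the ratio of the
    [a_i(q)] is [H_k(l)] computed in the basis attached to [sigma_1]; computing
    [H_k(l)] in the basis attached to [sigma] instead kills the three vertices
    of [sigma] and leaves [s^sigma_{k,i4} >= 0].  Not all of these vanish,
    since [i4] indexes a column of the nondegenerate matrix [s^sigma]. *)
From HB Require Import structures.
From mathcomp Require Import all_boot all_order all_algebra.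
From mathcomp Require Import ring.
Set Implicit Arguments. Unset Strict Implicit. Unset Printing Implicit Defensive.
Import Order.TTheory GRing.Theory Num.Theory.
Local Open Scope ring_scope.

Section LaurentMonomial.
Variables (F : fieldType) (p : nat) (q : 'I_p -> F).

Definition laurent_monomial (e : 'I_p -> int) : F := \prod_k q k ^ e k.

Lemma laurent_monomialM (e e' : 'I_p -> int) : (forall k, q k != 0) ->
  laurent_monomial e * laurent_monomial e' =
  laurent_monomial (fun k => e k + e' k).
Proof.
by move=> q_neq0; rewrite -big_split; apply: eq_bigr => k _; rewrite expfzDr.
Qed.

Lemma laurent_monomialXz (e : 'I_p -> int) (z : int) :
  laurent_monomial e ^ z = laurent_monomial (fun k => e k * z).
Proof.
rewrite /laurent_monomial.
rewrite (big_morph (fun x : F => x ^ z) (fun x y => expfzMl x y z) (exp1rz _ z)).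
by apply: eq_bigr => k _; rewrite exprz_exp.
Qed.

Lemma laurent_monomialV (e : 'I_p -> int) :
  (laurent_monomial e)^-1 = laurent_monomial (fun k => - e k).
Proof.
by rewrite -exprN1 laurent_monomialXz; apply: eq_bigr => k _; rewrite mulrN1.
Qed.

End LaurentMonomial.

Lemma sum_mul_indicator (R : pzRingType) (N : nat) (c : 'I_N -> R) (i : 'I_N) :
  \sum_j c j * (j == i)%:R = c i.
Proof.
under eq_bigr do rewrite mulr_natr mulrb.
by rewrite -big_mkcond big_pred1_eq.
Qed.

Section RelationVector.
Variables (N : nat) (i1 i2 i3 i4 : 'I_N) (m' n' : int).

Definition relation_vector (j : 'I_N) : int :=
  (j == i4)%:R + (m' + n' - 1) * (j == i3)%:R
  - m' * (j == i1)%:R - n' * (j == i2)%:R.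

Lemma sum_mul_relation_vector (c : 'I_N -> int) :
  \sum_j c j * relation_vector j =
  c i4 + (m' + n' - 1) * c i3 - m' * c i1 - n' * c i2.
Proof.
under eq_bigr => j _ do rewrite /relation_vector !mulrDr !mulrN
  [c j * (_ * _)]mulrCA [c j * (m' * _)]mulrCA [c j * (n' * _)]mulrCA.
by rewrite !big_split /= !sumrN -!mulr_sumr !sum_mul_indicator.
Qed.

Lemma relation_vector_in_L (b : 'I_N -> int * int) :
  b i4 = ((b i3).1 + m' * ((b i1).1 - (b i3).1) + n' * ((b i2).1 - (b i3).1),
          (b i3).2 + m' * ((b i1).2 - (b i3).2) + n' * ((b i2).2 - (b i3).2)) ->
  in_L b relation_vector.
Proof.
move=> b_i4; split.
- under eq_bigr do rewrite mulrC.
  by rewrite sum_mul_relation_vector b_i4 /=; ring.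
- under eq_bigr do rewrite mulrC.
  by rewrite sum_mul_relation_vector b_i4 /=; ring.
- under eq_bigr do rewrite -[relation_vector _]mul1r.
  by rewrite sum_mul_relation_vector; ring.
Qed.

Lemma laurent_monomial_relation (F : fieldType) (p : nat) (q : 'I_p -> F)
    (E : 'I_N -> 'I_p -> int) : (forall k, q k != 0) ->
  laurent_monomial q (E i4) * laurent_monomial q (E i3) ^ (m' + n' - 1) /
    (laurent_monomial q (E i1) ^ m' * laurent_monomial q (E i2) ^ n') =
  laurent_monomial q (fun k => \sum_j E j k * relation_vector j).
Proof.
move=> q_neq0; rewrite !laurent_monomialXz !laurent_monomialM //.
rewrite laurent_monomialV laurent_monomialM //.
by apply: eq_bigr => k _; rewrite sum_mul_relation_vector; congr (_ ^ _); ring.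
Qed.

End RelationVector.

Definition off_triangle_coeffs (N : nat) (sg : {set 'I_N}) (t : 'I_N -> nat)
    (j : 'I_N) : int :=
  if j \in sg then 0 else (t j)%:Z.

Lemma sum_off_triangle_coeffs (N : nat) (sg : {set 'I_N}) (t : 'I_N -> nat)
    (l : 'I_N -> int) :
  \sum_(j | j \notin sg) ((t j)%:R : rat) * (l j)%:~R =
  (\sum_j off_triangle_coeffs sg t j * l j)%:~R.
Proof.
rewrite rmorph_sum big_mkcond; apply: eq_bigr => j _.
by rewrite /off_triangle_coeffs; case: (j \in sg); rewrite /= ?mul0r ?rmorphM.
Qed.

Lemma nondegenerate_coeffs_col_neq0 (p : nat) (s : 'I_p -> 'I_p.+3 -> nat)
    (sg : {set 'I_p.+3}) (j : 'I_p.+3) :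
  nondegenerate_coeffs s sg -> j \notin sg -> exists k, s k j != 0%N.
Proof.
move=> [card_sg rank_s] j_notin.
have [k sk_neq0 | s_j0] := pickP (fun k => s k j != 0%N); first by exists k.
set A := \matrix_(k < p, t < #|~: sg|) ((s k (enum_val t))%:R : rat).
have j_in : j \in ~: sg by rewrite inE.
have col_j0 : row (enum_rank_in j_in j) A^T = 0.
  apply/rowP => k; rewrite !mxE enum_rankK_in //.
  by move/negbFE/eqP: (s_j0 k) ->.
have : ~~ row_free A^T.
  by apply/row_freePn; exists (enum_rank_in j_in j); rewrite col_j0 sub0mx.
by rewrite /row_free mxrank_tr rank_s card_sg eqxx.
Qed.

Lemma a_coefE (F : fieldType) (p : nat) (s1 : 'I_p -> 'I_p.+3 -> nat)
    (i : 'I_p.+3) (q : 'I_p -> F) :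
  a_coef s1 i q =
  laurent_monomial q (fun k => off_triangle_coeffs [set o0; o1; o2] (s1 k) i).
Proof.
have mem_s1 : (i \in [set o0; o1; o2]) = (i < 3)%N.
  by case: i => [[|[|[|n]]] ?]; rewrite !inE.
rewrite /a_coef /laurent_monomial /off_triangle_coeffs mem_s1.
by case: ifP => // _; rewrite big1 // => k _; rewrite expr0z.
Qed.

Theorem proposition2p5p4 (F : numClosedFieldType) (p : nat)
    (b : 'I_p.+3 -> int * int) (T : seq {set 'I_p.+3})
    (H : 'I_p -> ('I_p.+3 -> int) -> rat)
    (s : {set 'I_p.+3} -> 'I_p -> 'I_p.+3 -> nat)
    (i1 i2 i3 i4 : 'I_p.+3) (m' n' : int) :
  lattice_points_of_polygon b ->
  unimodular_triangulation b T ->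
  b o0 = (1, 0) -> b o1 = (0, 1) -> b o2 = (0, 0) ->
  [set o0; o1; o2] \in T ->
  (forall sg, sg \in T -> forall k l, in_L b l ->
     H k l = \sum_(j | j \notin sg) (s sg k j)%:R * (l j)%:~R) ->
  (forall sg, sg \in T -> nondegenerate_coeffs (s sg) sg) ->
  [set i1; i2; i3] \in T ->
  0 < det2 (vsub (b i1) (b i3)) (vsub (b i2) (b i3)) ->
  i4 \notin [set i1; i2; i3] ->
  b i4 = ((b i3).1 + m' * ((b i1).1 - (b i3).1) + n' * ((b i2).1 - (b i3).1),
          (b i3).2 + m' * ((b i1).2 - (b i3).2) + n' * ((b i2).2 - (b i3).2)) ->
  nonconstant_monomial (fun q : 'I_p -> F =>
    let a i := a_coef (s [set o0; o1; o2]) i q in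
    a i4 * a i3 ^ (m' + n' - 1) / (a i1 ^ m' * a i2 ^ n')).
Proof.
move=> _ _ _ _ _ s1_in H_coords nondeg sg_in _ i4_notin b_i4.
set s1 := [set o0; o1; o2]; set sg := [set i1; i2; i3].
set l := relation_vector i1 i2 i3 i4 m' n'.
have l_in_L : in_L b l by apply: relation_vector_in_L.
have exponentE k :
    \sum_j off_triangle_coeffs s1 (s s1 k) j * l j = (s sg k i4)%:Z.
  apply/eqP; rewrite -(eqr_int rat) -!sum_off_triangle_coeffs.
  rewrite -(H_coords _ s1_in) // (H_coords _ sg_in) // sum_off_triangle_coeffs.
  rewrite sum_mul_relation_vector /off_triangle_coeffs.
  by rewrite (negbTE i4_notin) !inE !eqxx ?orbT /= !mulr0 !subr0 ?addr0.
exists (fun k => s sg k i4); split.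
  exact: nondegenerate_coeffs_col_neq0 (nondeg _ sg_in) i4_notin.
move=> q q_neq0 /=; rewrite !a_coefE.
rewrite (@laurent_monomial_relation _ i1 i2 i3 i4 m' n' _ _ q
          (fun i k => off_triangle_coeffs s1 (s s1 k) i)) //.
by apply: eq_bigr => k _; rewrite exponentE.
Qed.
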